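(* Let $w\in\mathfrak{S}_n$ be right-almost-reducible at $i$. Then (1) $\max\{w(1),\ldots,w(i-1)\}=i+1$; (2) $w(i)>i+1$; and (3) the elements of $\{1,\ldots,i+1\}\setminus\{w(1),\ldots,w(i-1)\}$ appear out of order in the one-line notation of $w$ (i.e. if this set is $\{a<b\}$ then $w^{-1}(b)<w^{-1}(a)$).
   Context: $\mathfrak{S}_n$ has simple generators $S=\{s_1,\ldots,s_{n-1}\}$, $s_i=(i\ i{+}1)$, products are compositions $(uv)(m)=u(v(m))$, and $w$ is written in one-line notation $w(1)\cdots w(n)$; $\ell$ is length. $\supp(x)$ is the set of simple generators in a reduced word of $x$; $D_L(x)=\{s:\ell(sx)<\ell(x)\}$, $D_R(x)=\{s:\ell(xs)<\ell(x)\}$. For $J\subseteq S$, $x=x^Jx_J$ is the parabolic decomposition ($x_J\in W_J=\langle J\rangle$, $x^J$ minimal length in $xW_J$); it is a BP-decomposition if $\supp(x^J)\cap J\subseteq D_L(x_J)$. $w$ is Bruhat irreducible if $\supp(w)=S$ and $w$ is not a product $w'w''$ with $w',w''\ne e$ and disjoint supports. A Bruhat irreducible $w$ is almost reducible at $(J,i)$ if $w=w^Jw_J$ is a BP-decomposition with $\supp(w^J)\cap J=\{s_i\}$ and $s_i\notin D_L(w)\cup D_R(w)$. $w$ is right-almost-reducible at $i$ if it is Bruhat irreducible and almost reducible at $(\{s_i,\ldots,s_{n-1}\},i)$. *)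

(* Symmetric group S_n realised as {perm 'I_n};
   one-line values and simple generators use 1-based indices as in the paper. *)
From mathcomp Require Import all_boot all_fingroup.
Set Implicit Arguments. Unset Strict Implicit. Unset Printing Implicit Defensive.

Section SymGroup.
Variable n : nat.
Local Notation P := {perm 'I_n}.

(* paper's product: (uv)(m) = u(v(m));  mathcomp's (v * u) x = u (v x) *)
Definition pmul (u v : P) : P := (v * u)%g.

(* simple generator s_i = (i i+1) in 1-based notation, i.e. the
   transposition of the 0-based points i-1 and i; meaningful for 0 < i < n *)
Definition sgen (i : nat) : P :=
  match (insub i.-1 : option 'I_n), (insub i : option 'I_n) with
  | Some a, Some b => tperm a b
  | _, _ => 1%g
  end.

Definition gen_ok (i : nat) : bool := (0 < i < n)%N.

Definition wprod (s : seq nat) : P := foldr (fun i acc => pmul (sgen i) acc) 1%g s.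

Definition word_of (w : P) (s : seq nat) : bool := all gen_ok s && (wprod s == w).

(* Coxeter length of a permutation = number of inversions *)
Definition ell (w : P) : nat :=
  #|[set p : 'I_n * 'I_n | (val p.1 < val p.2)%N && (val (w p.2) < val (w p.1))%N]|.

Definition reduced_word (w : P) (s : seq nat) : bool := word_of w s && (size s == ell w).

Definition supp (w : P) (i : nat) : Prop := exists s, reduced_word w s /\ i \in s.

Definition DL (w : P) (i : nat) : Prop := gen_ok i /\ (ell (pmul (sgen i) w) < ell w)%N.
Definition DR (w : P) (i : nat) : Prop := gen_ok i /\ (ell (pmul w (sgen i)) < ell w)%N.

Definition inWJ (J : nat -> Prop) (x : P) : Prop :=
  exists s, word_of x s /\ forall i, i \in s -> J i.

Definition parabolic (J : nat -> Prop) (x u v : P) : Prop :=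
  [/\ x = pmul u v, inWJ J v,
      (exists y, inWJ J y /\ u = pmul x y) &
      forall z, (exists y, inWJ J y /\ z = pmul x y) -> (ell u <= ell z)%N].

Definition BP_decomp (J : nat -> Prop) (x u v : P) : Prop :=
  parabolic J x u v /\ forall i, supp u i -> J i -> DL v i.

Definition bruhat_irreducible (w : P) : Prop :=
  (forall i, gen_ok i -> supp w i) /\
  ~ (exists w1 w2 : P, [/\ w1 <> 1%g, w2 <> 1%g,
        (forall i, ~ (supp w1 i /\ supp w2 i)) & w = pmul w1 w2]).

Definition almost_reducible (w : P) (J : nat -> Prop) (i : nat) : Prop :=
  bruhat_irreducible w /\
  exists u v, [/\ BP_decomp J w u v,
                  (forall k, (supp u k /\ J k) <-> k = i),
                  ~ DL w i & ~ DR w i].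

Definition right_almost_reducible (w : P) (i : nat) : Prop :=
  almost_reducible w (fun k => (i <= k < n)%N) i.

(* w acting on 0-based naturals (identity outside 'I_n) *)
Definition pw (w : P) (k : nat) : nat :=
  oapp (fun o : 'I_n => val (w o)) k (insub k : option 'I_n).

(* one-line notation, 1-based: oneline w m = w(m) *)
Definition oneline (w : P) (m : nat) : nat := (pw w m.-1).+1.
Definition oneline_inv (w : P) (a : nat) : nat := (pw (w^-1)%g a.-1).+1.

End SymGroup.

From mathcomp Require Import all_boot all_fingroup zify.

(* Write w = u v with u = w^J, v = w_J and J = {s_i, ..., s_{n-1}}.  As supp(u) meets J
   only in s_i, u permutes {1, ..., i+1} and moves i+1, while v fixes 1, ..., i-1; so
   w(m) = u(m) for m < i.  Minimality of u in u W_J gives u(i) < u(i+1), so w(1..i-1)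
   is {1, ..., i+1} minus {u(i) < u(i+1)} and contains i+1: this is (1), and (3) follows
   from s_i being a left descent of v, as w^-1(u(i+1)) = v^-1(i+1) < v^-1(i) = w^-1(u(i)).
   For (2), v(i) >= i, and v(i) = i contradicts that descent.  If v(i) = i+1 then
   w = (u s_i)(s_i v), where u s_i fixes everything above i+1 and s_i v fixes 1, ..., i,
   so the two factors have disjoint supports, contradicting Bruhat irreducibility (the
   second factor is not 1 because s_i is not a right descent of w).  Hence v(i) > i+1 is
   fixed by u and w(i) = v(i).
   The support facts rest on: if x stabilises {1, ..., k}, then s_k occurs in no reduced
   word of x, because the left inversion set grows along a reduced word and the first s_k
   adds an inversion of values separated by k. *)

Set Implicit Arguments. Unset Strict Implicit. Unset Printing Implicit Defensive.

Section SymmetricGroup.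
Variable n : nat.
Local Notation P := {perm 'I_n}.
Implicit Types (x y z : P) (s t : seq nat).

Lemma pmulE x y p : pmul x y p = x (y p).
Proof. by rewrite permM. Qed.

Lemma pmulA x y z : pmul x (pmul y z) = pmul (pmul x y) z.
Proof. by rewrite /pmul mulgA. Qed.

Lemma pmulV x y : (pmul x y)^-1%g = pmul y^-1%g x^-1%g.
Proof. by rewrite /pmul invMg. Qed.

Lemma pmul1g x : pmul 1%g x = x.
Proof. exact: mulg1. Qed.

Lemma pmulg1 x : pmul x 1%g = x.
Proof. exact: mul1g. Qed.

Lemma sgen_tperm (a b : 'I_n) : b = a.+1 :> nat -> sgen n b = tperm a b.
Proof.
move=> hab; rewrite /sgen hab /=.
case: insubP => [a' _ Ea|]; last by rewrite ltn_ord.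
case: insubP => [b' _ Eb|]; last by rewrite -hab ltn_ord.
by congr tperm; apply: val_inj; rewrite ?Ea ?Eb.
Qed.

Lemma gen_ok_adj (a b : 'I_n) : b = a.+1 :> nat -> gen_ok n b.
Proof. by move=> hab; rewrite /gen_ok ltn_ord hab. Qed.

Lemma gen_okP j : gen_ok n j -> exists a b : 'I_n, b = a.+1 :> nat /\ b = j :> nat.
Proof.
case/andP=> j_gt0 j_lt; have ja : j.-1 < n by lia.
by exists (Ordinal ja), (Ordinal j_lt); split => //=; lia.
Qed.

Lemma sgenK j : pmul (sgen n j) (sgen n j) = 1%g.
Proof.
rewrite /pmul /sgen; case: insubP => [a _ _|_]; last by rewrite mulg1.
by case: insubP => [b _ _|_]; rewrite ?tperm2 ?mulg1.
Qed.

Lemma sgenV j : (sgen n j)^-1%g = sgen n j.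
Proof. by apply/eqP; rewrite eq_invg_mul; apply/eqP; apply: sgenK. Qed.

Lemma sgen_fix j (p : 'I_n) : p != j.-1 :> nat -> p != j :> nat -> sgen n j p = p.
Proof.
move=> pa pb; rewrite /sgen; case: insubP => [a _ Ea|_]; last by rewrite perm1.
case: insubP => [b _ Eb|_]; last by rewrite perm1.
by rewrite tpermD // -val_eqE ?Ea ?Eb eq_sym.
Qed.

Lemma wprod_cat s t : wprod n (s ++ t) = pmul (wprod n s) (wprod n t).
Proof. by elim: s => [|j s IHs] /=; rewrite ?pmul1g // IHs pmulA. Qed.

Lemma wprod_fix s (p : 'I_n) : (forall j, j \in s -> sgen n j p = p) -> wprod n s p = p.
Proof.
elim: s => [|j s IHs] fixp /=; first by rewrite perm1.
by rewrite pmulE IHs ?fixp ?mem_head // => k ks; rewrite fixp // inE ks orbT.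
Qed.

Lemma ltn_permN x (p q : 'I_n) : p != q -> (x q < x p) = ~~ (x p < x q).
Proof.
by move=> pq; rewrite ltnNge leq_eqVlt negb_or val_eqE (inj_eq perm_inj) pq.
Qed.

Lemma ltn_permN_adj x (a b : 'I_n) : b = a.+1 :> nat -> (x b < x a) = ~~ (x a < x b).
Proof. by move=> hab; apply: ltn_permN; rewrite -val_eqE /= hab neq_ltn ltnSn. Qed.

Lemma ltn_tperm_adj (a b c d : 'I_n) : b = a.+1 :> nat -> (c, d) != (b, a) ->
  (tperm a b d < tperm a b c) = ((c, d) == (a, b)) || (d < c).
Proof.
move=> hab; rewrite !xpair_eqE -!val_eqE /=.
case: tpermP => [->|->|/eqP ca /eqP cb]; case: tpermP => [->|->|/eqP da /eqP db].
all: try move: ca cb; try move: da db; rewrite -?val_eqE /=.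
all: by move=> *; apply/idP/idP; lia.
Qed.

Definition invs z : {set 'I_n * 'I_n} :=
  [set pq : 'I_n * 'I_n | (pq.1 < pq.2) && (z pq.2 < z pq.1)].

Lemma ellE z : ell z = #|invs z|.
Proof. by []. Qed.

Lemma ell1 : ell (1%g : P) = 0.
Proof. by rewrite ellE; apply: eq_card0 => -[p q]; rewrite !inE !perm1 /=; lia. Qed.

Lemma ell_inv z : ell z^-1%g = ell z.
Proof.
suff le_ell y : ell y <= ell y^-1%g by apply/eqP; rewrite eqn_leq le_ell -{2}(invgK z) le_ell.
have swap_inj : injective (fun pq : 'I_n * 'I_n => (y pq.2, y pq.1)).
  by move=> [p q] [p' q'] [/perm_inj -> /perm_inj ->].
rewrite !ellE -(card_imset _ swap_inj); apply/subset_leq_card/subsetP => _ /imsetP[[p q] + ->].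
by rewrite !inE /= !permK andbC.
Qed.

Lemma invs_mulsl z (a b : 'I_n) : b = a.+1 :> nat -> z^-1%g a < z^-1%g b ->
  invs (pmul (sgen n b) z) = (z^-1%g a, z^-1%g b) |: invs z.
Proof.
move=> hab zab; apply/setP => -[p q].
rewrite -[p](permK z) -[q](permK z); move: (z p) (z q) => c d.
rewrite !inE /= !pmulE !permKV (sgen_tperm hab) xpair_eqE !(inj_eq perm_inj) -xpair_eqE.
have [[-> ->]|cd_ba] := eqVneq (c, d) (b, a).
  rewrite xpair_eqE -!val_eqE /= hab; move: zab; lia.
by rewrite ltn_tperm_adj //; case: eqP => [[-> ->]|_] /=; rewrite ?zab.
Qed.

Lemma ell_mulsl_asc z (a b : 'I_n) : b = a.+1 :> nat -> z^-1%g a < z^-1%g b ->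
  ell (pmul (sgen n b) z) = (ell z).+1.
Proof.
move=> hab zab; rewrite !ellE (invs_mulsl hab zab) cardsU1 !inE /= !permKV hab.
by rewrite [a.+1 < a]ltnNge leqnSn andbF.
Qed.

Lemma ell_mulsr_asc z (a b : 'I_n) : b = a.+1 :> nat -> z a < z b ->
  ell (pmul z (sgen n b)) = (ell z).+1.
Proof.
by move=> hab zab; rewrite -ell_inv pmulV sgenV (ell_mulsl_asc hab) ?invgK // ell_inv.
Qed.

Lemma ell_mulsr_desc z (a b : 'I_n) : b = a.+1 :> nat -> z b < z a ->
  ell z = (ell (pmul z (sgen n b))).+1.
Proof.
move=> hab zba; rewrite -(ell_mulsr_asc hab) -?pmulA ?sgenK ?pmulg1 //.
by rewrite !pmulE (sgen_tperm hab) tpermL tpermR.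
Qed.

Lemma ell_mulsr_le z j : gen_ok n j -> ell (pmul z (sgen n j)) <= (ell z).+1.
Proof.
case/gen_okP => a [b [hab <-]]; have [zab|] := boolP (z a < z b).
  by rewrite (ell_mulsr_asc hab zab).
by rewrite -ltn_permN_adj // => /(ell_mulsr_desc hab) ->; rewrite ltnW.
Qed.

Lemma DRP z (a b : 'I_n) : b = a.+1 :> nat -> DR z b <-> z b < z a.
Proof.
move=> hab; split => [[_]|zba].
  by rewrite ltn_permN_adj //; apply: contraTN => /(ell_mulsr_asc hab) ->; lia.
by split; [apply: gen_ok_adj hab | rewrite (ell_mulsr_desc hab zba)].
Qed.

Lemma DLP z (a b : 'I_n) : b = a.+1 :> nat -> DL z b <-> z^-1%g b < z^-1%g a.
Proof. by move=> hab; rewrite -(DRP _ hab) /DL /DR -ell_inv pmulV sgenV ell_inv. Qed.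

Lemma ell_wprod_le y s : all (gen_ok n) s -> ell (pmul y (wprod n s)) <= ell y + size s.
Proof.
elim: s y => [|j s IHs] y /=; first by rewrite pmulg1 addn0.
case/andP => j_ok s_ok; rewrite pmulA; apply: leq_trans (IHs _ s_ok) _.
by rewrite addnS -addSn leq_add2r ell_mulsr_le.
Qed.

Lemma invsV_wprod_sub y s : all (gen_ok n) s -> ell (pmul y (wprod n s)) = ell y + size s ->
  invs y^-1%g \subset invs (pmul y (wprod n s))^-1%g.
Proof.
elim: s y => [|j s IHs] y /=; first by rewrite pmulg1.
case/andP => /gen_okP[a [b [hab <-]]] s_ok; rewrite pmulA addnS => ell_eq.
have := ell_wprod_le (pmul y (sgen n b)) s_ok; have := ell_mulsr_le y (gen_ok_adj hab).
move=> le_yb le_s; apply: subset_trans (IHs _ s_ok _); last by lia.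
have [yab|] := boolP (y a < y b).
  by rewrite pmulV sgenV (invs_mulsl hab) ?invgK // subsetUr.
by rewrite -ltn_permN_adj // => /(ell_mulsr_desc hab); lia.
Qed.

Lemma reduced_word_catl x s t : reduced_word x (s ++ t) ->
  ell (wprod n s) = size s /\ invs (wprod n s)^-1%g \subset invs x^-1%g.
Proof.
case/andP => /andP[]; rewrite all_cat => /andP[s_ok t_ok] /eqP <- /eqP.
rewrite wprod_cat size_cat => ell_st.
have := ell_wprod_le 1 s_ok; rewrite pmul1g ell1 => le_s.
have le_t := ell_wprod_le (wprod n s) t_ok.
have ell_s : ell (wprod n s) = size s by lia.
by split => //; apply: invsV_wprod_sub => //; lia.
Qed.

Definition preserves_lt k x := forall p : 'I_n, (x p < k) = (p < k).

Lemma preserves_lt_fix_ge k x : (forall p : 'I_n, k <= p -> x p = p) -> preserves_lt k x.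
Proof.
move=> fixx p; suff /perm_closed : perm_on [set q : 'I_n | q < k] x by move/(_ p); rewrite !inE.
by apply/subsetP => q; rewrite !inE; apply: contraR; rewrite -leqNgt => /fixx ->; rewrite eqxx.
Qed.

Lemma preserves_lt_fix_lt k x : (forall p : 'I_n, p < k -> x p = p) -> preserves_lt k x.
Proof.
move=> fixx p; suff /perm_closed : perm_on [set q : 'I_n | k <= q] x.
  by move/(_ p); rewrite !inE => kx; rewrite !ltnNge kx.
by apply/subsetP => q; rewrite !inE; apply: contraR; rewrite -ltnNge => /fixx ->; rewrite eqxx.
Qed.

Lemma preserves_ltV k x : preserves_lt k x -> preserves_lt k x^-1%g.
Proof. by move=> px p; rewrite -px permKV. Qed.

Lemma preserves_lt_wprod k s : all (gen_ok n) s -> k \notin s -> preserves_lt k (wprod n s).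
Proof.
elim: s => [|j s IHs] /=; first by move=> _ _ p; rewrite perm1.
case/andP => /gen_okP[a [b [hab <-]]] s_ok; rewrite inE negb_or => /andP[kb ks] p.
rewrite pmulE -(IHs s_ok ks p) (sgen_tperm hab).
by case: tpermP => [->|->|_ _] //; rewrite hab in kb *; apply/idP/idP; lia.
Qed.

Lemma reduced_word_notin x s k : reduced_word x s -> preserves_lt k x -> k \notin s.
Proof.
move=> + px; apply: contraTN; rewrite -has_pred1 => /split_find[_ s1 s2 /eqP -> ks1].
rewrite has_pred1 in ks1; apply/negP => red.
have [ell_s1k invs_s1k] := reduced_word_catl red.
move: (red); rewrite cat_rcons => /reduced_word_catl[ell_s1 _].
have /and3P[/gen_okP[a [b [hab def_k]]] s1_ok _] :
    [&& gen_ok n k, all (gen_ok n) s1 & all (gen_ok n) s2].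
  by case/andP: red => /andP[]; rewrite all_cat all_rcons -andbA.
subst k; set y := wprod n s1 in ell_s1 s1_ok.
have wprod_s1b : wprod n (rcons s1 b) = pmul y (sgen n b).
  by rewrite -cats1 wprod_cat /= pmulg1.
have yab : y a < y b.
  rewrite -[_ < _]negbK -ltn_permN_adj //; apply/negP => /(ell_mulsr_desc hab).
  by rewrite -wprod_s1b ell_s1k ell_s1 size_rcons; lia.
have := subsetP invs_s1k (y a, y b).
rewrite wprod_s1b pmulV sgenV (invs_mulsl hab) ?invgK // setU11 inE /= => /(_ isT).
have y_pres := preserves_lt_wprod s1_ok ks1; have xV_pres := preserves_ltV px.
have : x^-1%g (y a) < b by rewrite xV_pres y_pres hab.
have : ~~ (x^-1%g (y b) < b) by rewrite xV_pres y_pres ltnn.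
lia.
Qed.

Lemma supp_gen_ok x k : supp x k -> gen_ok n k.
Proof. by case=> s [/andP[/andP[/allP s_ok _] _] ks]; apply: s_ok. Qed.

Lemma preserves_lt_supp x k : preserves_lt k x -> ~ supp x k.
Proof. by move=> px [s [red_s]]; apply/negP; apply: reduced_word_notin px. Qed.

Lemma exists_descent x : x != 1%g -> exists a b : 'I_n, b = a.+1 :> nat /\ x b < x a.
Proof.
move=> x_neq1; have [p0 moved_p0] : exists p, x p != p.
  apply/existsP; apply: contraNT x_neq1; rewrite negb_exists => /forallP fixx.
  by apply/eqP/permP => p; rewrite perm1; apply/eqP/negPn/fixx.
have [p moved_p p_min] := @arg_minnP _ p0 (fun p => x p != p) val moved_p0.
have x_pres : preserves_lt p x.
  by apply: preserves_lt_fix_lt => q; apply: contraTeq => /p_min; rewrite leqNgt.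
set b := x^-1%g p; have xb : x b = p by rewrite permKV.
have b_ge : p <= b by rewrite leqNgt -x_pres xb ltnn.
have b_neq : b != p by apply: contraNneq moved_p => b_p; rewrite -{1}b_p xb.
have b_gt : p < b by rewrite ltn_neqAle b_ge andbT; apply: contra b_neq => /eqP/val_inj ->.
have a_lt : b.-1 < n by have := ltn_ord b; lia.
exists (Ordinal a_lt), b; split => /=; first by lia.
have xa_ge : p <= x (Ordinal a_lt) by rewrite leqNgt x_pres /=; lia.
rewrite xb ltn_neqAle xa_ge andbT; apply/eqP => /val_inj.
by rewrite -{1}xb => /perm_inj/(congr1 val) /=; lia.
Qed.

Lemma ex_reduced_word x : exists s, reduced_word x s.
Proof.
have [m ell_lt] := ubnP (ell x); elim: m x ell_lt => // m IHm x ell_lt.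
have [->|/exists_descent[a [b [hab xba]]]] := eqVneq x 1%g.
  by exists [::]; rewrite /reduced_word /word_of /= ell1 !eqxx.
have ell_x := ell_mulsr_desc hab xba.
have [s /andP[/andP[s_ok /eqP def_xb] /eqP size_s]] :
    exists s, reduced_word (pmul x (sgen n b)) s by apply: IHm; lia.
exists (rcons s b); rewrite /reduced_word /word_of all_rcons (gen_ok_adj hab) s_ok.
by rewrite size_rcons size_s ell_x -cats1 wprod_cat def_xb /= pmulg1 -pmulA sgenK pmulg1 !eqxx.
Qed.

Lemma supp_fix_gt x i : (forall k, i < k -> ~ supp x k) -> forall p : 'I_n, i < p -> x p = p.
Proof.
move=> supp_le p ip; have [s red_s] := ex_reduced_word x.
have /andP[/andP[_ /eqP <-] _] := red_s; apply: wprod_fix => j js.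
have j_le : j <= i by rewrite leqNgt; apply/negP => ij; apply: supp_le ij _; exists s.
by apply: sgen_fix; lia.
Qed.

Lemma supp_moved x (b : 'I_n) : supp x b -> (forall p : 'I_n, b < p -> x p = p) -> x b != b.
Proof.
move=> supp_b fix_gt; apply/eqP => xb; apply: preserves_lt_supp supp_b.
by apply: preserves_lt_fix_ge => p; rewrite leq_eqVlt => /orP[/eqP/val_inj <- | /fix_gt].
Qed.

Lemma inWJ_fix_lt (J : nat -> Prop) x i : inWJ J x -> (forall k, J k -> i <= k) ->
  forall p : 'I_n, p < i.-1 -> x p = p.
Proof.
case=> s [/andP[_ /eqP <-] sJ] J_ge p p_lt; apply: wprod_fix => j /sJ/J_ge ij.
by apply: sgen_fix; lia.
Qed.

Lemma inWJ_mulsr (J : nat -> Prop) y j : inWJ J y -> J j -> gen_ok n j ->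
  inWJ J (pmul y (sgen n j)).
Proof.
case=> s [/andP[s_ok /eqP <-] sJ] Jj j_ok; exists (rcons s j); split.
  by rewrite /word_of all_rcons j_ok s_ok -cats1 wprod_cat /= pmulg1 eqxx.
by move=> k; rewrite mem_rcons inE => /orP[/eqP -> | /sJ].
Qed.

Lemma parabolic_asc (J : nat -> Prop) x u v (a b : 'I_n) : b = a.+1 :> nat ->
  parabolic J x u v -> J b -> u a < u b.
Proof.
move=> hab [_ _ [y [y_J def_u]] u_min] Jb.
have ub_coset : exists y', inWJ J y' /\ pmul u (sgen n b) = pmul x y'.
  exists (pmul y (sgen n b)); rewrite def_u pmulA; split => //.
  by apply: inWJ_mulsr => //; apply: gen_ok_adj hab.
rewrite -[_ < _]negbK -ltn_permN_adj //; apply/negP => /(ell_mulsr_desc hab) ell_u.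
by have := u_min _ ub_coset; rewrite ell_u; lia.
Qed.

Lemma exists_ord_succ m : 0 < m <= n -> exists p : 'I_n, m = p.+1.
Proof.
move=> m_range; have m_lt : m.-1 < n by lia.
by exists (Ordinal m_lt) => /=; lia.
Qed.

Lemma oneline_ord x (p : 'I_n) : oneline x p.+1 = (x p).+1.
Proof. by rewrite /oneline /pw /= valK. Qed.

Lemma oneline_inv_ord x (p : 'I_n) : oneline_inv x p.+1 = (x^-1%g p).+1.
Proof. by rewrite /oneline_inv /pw /= valK. Qed.
End SymmetricGroup.

(* [a] and [b] are the 0-based points i-1 and i, i.e. the paper's i and i+1. *)
Section RightAlmostReducible.
Variables (n : nat) (a b : 'I_n) (u v : {perm 'I_n}).
Hypothesis hab : b = a.+1 :> nat.
Hypothesis u_fix : forall p : 'I_n, b < p -> u p = p.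
Hypothesis v_fix : forall p : 'I_n, p < a -> v p = p.
Hypothesis u_moves_b : u b != b.
Hypothesis u_asc : u a < u b.
Hypothesis v_desc : v^-1%g b < v^-1%g a.
Local Notation w := (pmul u v).

Let u_pres : preserves_lt b.+1 u := preserves_lt_fix_ge u_fix.
Let v_pres : preserves_lt a v := preserves_lt_fix_lt v_fix.

Lemma u_b_lt : u b < b.
Proof.
have : u b <= b by rewrite -ltnS u_pres.
by rewrite leq_eqVlt => /orP[/eqP/val_inj ub|//]; move: u_moves_b; rewrite ub eqxx.
Qed.

Lemma uV_b_lt : u^-1%g b < a.
Proof.
have q_le : u^-1%g b <= b by rewrite -ltnS -u_pres permKV.
have q_b : u^-1%g b != b :> nat.
  by apply: contra u_moves_b => /eqP/val_inj {1}<-; rewrite permKV.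
have q_a : u^-1%g b != a :> nat.
  by apply/eqP => /val_inj q_a; have := u_b_lt; have := u_asc; rewrite -q_a permKV; lia.
lia.
Qed.

Lemma w_prefix (p : 'I_n) : p < a -> w p = u p.
Proof. by move=> pa; rewrite pmulE v_fix. Qed.

Lemma max_oneline_prefix : \max_(1 <= m < b) oneline w m = b.+1.
Proof.
apply/eqP; rewrite eqn_leq; apply/andP; split.
  apply/bigmax_leqP_seq => m; rewrite mem_index_iota => m_range _.
  have [p def_m] : exists p : 'I_n, m = p.+1 by apply: exists_ord_succ; have := ltn_ord b; lia.
  by subst m; rewrite oneline_ord w_prefix ?u_pres; lia.
have uVb_in : (u^-1%g b).+1 \in index_iota 1 b.
  by rewrite mem_index_iota; have := uV_b_lt; lia.
have := @leq_bigmax_seq _ _ xpredT (oneline w) _ uVb_in isT.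
by rewrite oneline_ord w_prefix ?uV_b_lt // permKV.
Qed.

Lemma v_a_neq_b : bruhat_irreducible w -> ~ DR w b -> v a != b.
Proof.
move=> [_ irr] not_DR; apply/eqP => vab; apply: irr.
exists (pmul u (sgen n b)), (pmul (sgen n b) v); split.
- move/(congr1 (fun x : {perm _} => val (x b))).
  by rewrite /= pmulE (sgen_tperm hab) tpermR perm1; have := u_b_lt; lia.
- move=> sv1; apply: not_DR; apply/(DRP _ hab).
  have -> : v = sgen n b by rewrite -[v]pmul1g -(sgenK n b) -pmulA sv1 pmulg1.
  by rewrite !pmulE (sgen_tperm hab) tpermL tpermR.
- move=> k [supp_us supp_sv]; case: (ltnP b k) => [bk|kb].
    apply: preserves_lt_supp supp_us; apply: preserves_lt_fix_ge => p kp.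
    by rewrite pmulE sgen_fix ?u_fix //; lia.
  apply: preserves_lt_supp supp_sv; apply: preserves_lt_fix_lt => p pk; rewrite pmulE.
  have [pa|ap] := ltnP p a; first by rewrite v_fix // sgen_fix //; lia.
  have -> : p = a by apply: val_inj => /=; lia.
  by rewrite vab (sgen_tperm hab) tpermR.
- by rewrite pmulA -(pmulA u) sgenK pmulg1.
Qed.

Lemma oneline_b_gt : bruhat_irreducible w -> ~ DR w b -> b.+1 < oneline w b.
Proof.
move=> irr not_DR; rewrite [in oneline _ _]hab oneline_ord ltnS.
have va_b := v_a_neq_b irr not_DR.
have va_ge : a <= v a by rewrite leqNgt v_pres ltnn.
have va_a : v a != a :> nat.
  apply/eqP => /val_inj va; have vVa : v^-1%g a = a by rewrite -{1}va permK.
  have := v_desc; rewrite vVa => /[dup] /v_fix; rewrite permKV => <-; lia.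
have va_gt : b < v a by move: va_b; rewrite -val_eqE /=; lia.
by rewrite pmulE u_fix.
Qed.

Lemma prefix_missing_value (c : 'I_n) : c <= b ->
  c.+1 \notin [seq oneline w m | m <- index_iota 1 b] -> c = u a \/ c = u b.
Proof.
move=> c_le c_notin; have q_le : u^-1%g c <= b by rewrite -ltnS -u_pres permKV.
have q_ge : a <= u^-1%g c.
  rewrite leqNgt; apply: contra c_notin => q_lt; apply/mapP; exists (u^-1%g c).+1.
    by rewrite mem_index_iota; lia.
  by rewrite oneline_ord w_prefix // permKV.
rewrite -[c](permKV u); have [q_lt|q_ge'] := ltnP (u^-1%g c) b; [left|right];
  by congr (u _); apply: val_inj => /=; lia.
Qed.

Lemma prefix_missing_values_out_of_order (c d : nat) : 1 <= c -> c < d -> d <= b.+1 ->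
  c \notin [seq oneline w m | m <- index_iota 1 b] ->
  d \notin [seq oneline w m | m <- index_iota 1 b] ->
  oneline_inv w d < oneline_inv w c.
Proof.
move=> c_gt0 cd d_le; have b_lt := ltn_ord b.
have [c' def_c] : exists c' : 'I_n, c = c'.+1 by apply: exists_ord_succ; lia.
have [d' def_d] : exists d' : 'I_n, d = d'.+1 by apply: exists_ord_succ; lia.
subst c d; move=> /prefix_missing_value c_miss /prefix_missing_value d_miss.
have [c_le d_le'] : c' <= b /\ d' <= b by split; lia.
move: cd; rewrite !oneline_inv_ord pmulV !pmulE.
by case: (c_miss c_le) => ->; case: (d_miss d_le') => ->; rewrite ?permK; lia.
Qed.
End RightAlmostReducible.

Unset Implicit Arguments.

Theorem proposition5p4 (n : nat) (w : {perm 'I_n}) (i : nat)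
  (H : right_almost_reducible w i) :
  [/\ (\max_(1 <= m < i) oneline w m)%N = i.+1,
      (i.+1 < oneline w i)%N &
      forall a b : nat, (1 <= a)%N -> (a < b)%N -> (b <= i.+1)%N ->
        a \notin [seq oneline w m | m <- index_iota 1 i] ->
        b \notin [seq oneline w m | m <- index_iota 1 i] ->
        (oneline_inv w b < oneline_inv w a)%N].
Proof.
have [irr [u [v [[u_par BP_v] supp_u _ not_DR]]]] := H.
have [supp_u_i J_i] := (supp_u i).2 erefl.
have /gen_okP[a [b [hab def_b]]] := supp_gen_ok supp_u_i; subst i.
have [w_uv v_J _ _] := u_par; rewrite w_uv in irr not_DR *.
have u_fix : forall p : 'I_n, b < p -> u p = p.
  apply: supp_fix_gt => k bk supp_k; have /andP[_ k_lt] := supp_gen_ok supp_k.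
  by have := (supp_u k).1; rewrite (ltnW bk) k_lt => /(_ (conj supp_k isT)); lia.
have v_fix : forall p : 'I_n, p < a -> v p = p.
  by move=> p pa; apply: (inWJ_fix_lt v_J (i := b)) => [k /andP[]|]; rewrite ?hab.
have u_moves_b := supp_moved supp_u_i u_fix.
have u_asc := parabolic_asc hab u_par J_i.
have v_desc := (DLP _ hab).1 (BP_v _ supp_u_i J_i).
split.
- by apply: (max_oneline_prefix hab).
- by apply: (oneline_b_gt hab).
- by apply: (prefix_missing_values_out_of_order hab).
Qed.
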